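(* Let $p,q\in\mathbb R$. The differential equation $$x^3R'''(x)+4x^2R''(x)+2x(1-2p^2-4qx+2x^2)R'(x)-4(p^2+qx)R(x)=0$$ admits a unique formal solution of the form $R(x)=\frac1\pi+\frac1\pi\sum_{n\ge1}\pi^n d_n x^{-n}$, and its coefficients are given by $$d_1=-\frac q\pi,\quad d_2=-\frac{p^2+q^2}{2\pi^2},\quad d_{n+2}=\frac1\pi\frac{2n+1}{n+2}q\,d_{n+1}+\frac{1}{\pi^2}\frac{n-1}{n+2}\Big(p^2-\frac{n^2}{4}\Big)d_n\quad(n\ge1).$$
   Context: This differential equation is satisfied by $R(x)=\frac1\pi\rho_{(1),\infty}(x/\pi;2,p,q)$, the rescaled bulk density at the spectrum singularity of the generalised circular Jacobi ensemble with $\beta=2$ (probability density on $(-\pi,\pi]^N$ proportional to $\prod_l e^{q\theta_l}|1+e^{i\theta_l}|^{2p}\prod_{j<k}|e^{i\theta_k}-e^{i\theta_j}|^2$, with $\rho_{(1),\infty}(x)=\lim_{N\to\infty}\frac{2\pi}{N}\rho_{(1),N}(-\pi\,\mathrm{sgn}(x)+2\pi x/N)$). The series $\sum_n d_n x^{-n}$ is the non-oscillatory part of the large-$|x|$ asymptotic expansion of $\rho_{(1),\infty}(x;2,p,q)-1$. *)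

From Stdlib Require Import Reals ZArith.
Open Scope R_scope.

(* A formal series in 1/x:  sum_{n in Z} a n * x^(-n), where a : Z -> R.
   (Coefficient a n multiplies x^(-n).  Series arising here have a n = 0
   for n < -3, so all operations below are purely formal, finite per
   coefficient.) *)
Definition fser := Z -> R.

(* formal derivative d/dx : a_k x^{-k} |-> -k a_k x^{-k-1} *)
Definition fD (a : fser) : fser := fun n => - IZR (n - 1) * a (n - 1)%Z.
(* multiplication by x : a_k x^{-k} |-> a_k x^{-(k-1)} *)
Definition fX (a : fser) : fser := fun n => a (n + 1)%Z.
Definition fadd (a b : fser) : fser := fun n => a n + b n.
Definition fscale (c : R) (a : fser) : fser := fun n => c * a n.

Definition ode_lhs (p q : R) (Rs : fser) : fser :=
  fadd (fX (fX (fX (fD (fD (fD Rs))))))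
  (fadd (fscale 4 (fX (fX (fD (fD Rs)))))
  (fadd (fscale 2 (fX (fadd (fscale (1 - 2 * p ^ 2) (fD Rs))
                        (fadd (fscale (- 4 * q) (fX (fD Rs)))
                              (fscale 2 (fX (fX (fD Rs))))))))
        (fscale (-4) (fadd (fscale (p ^ 2) Rs) (fscale q (fX Rs)))))).

(* The formal series R(x) = 1/pi + 1/pi * sum_{n>=1} pi^n d_n x^{-n}
   (the value d 0 is irrelevant). *)
Definition ser_of (d : nat -> R) : fser := fun n =>
  if (n <? 0)%Z then 0
  else if (n =? 0)%Z then / PI
  else / PI * PI ^ (Z.to_nat n) * d (Z.to_nat n).

Definition is_formal_solution (p q : R) (d : nat -> R) : Prop :=
  forall n : Z, ode_lhs p q (ser_of d) n = 0.

From Stdlib Require Import Reals ZArith Lra Lia.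
Open Scope R_scope.

(* Writing a_n for the coefficient of x^(-n), the operator of the differential
   equation acts on a formal series in 1/x coefficientwise by
     (n-1)(4p^2-n^2) a_n + 4q(2n+1) a_(n+1) - 4(n+2) a_(n+2)        (ode_lhs_coeff).
   For the series R = 1/pi + 1/pi sum_{n>=1} pi^n d_n x^(-n) this coefficient is
   identically 0 for n <= -2, is a nonzero multiple of d_1 + q/pi for n = -1,
   (given d_1) of d_2 + (p^2+q^2)/(2 pi^2) for n = 0, and for n >= 1 a nonzero
   multiple of d_(n+2) - step n d_n d_(n+1), where step is the right-hand side of
   the claimed recursion.  Hence being a formal solution is EQUIVALENT to the
   initial values plus the recursion (solution_iff_recursion).  Existence and
   uniqueness then follow from the general fact that a second-order recursion
   with prescribed d_1, d_2 has exactly one solution on n >= 1, proved first for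
   an arbitrary step function. *)

Section SecondOrderRecursion.

Variable f : nat -> R -> R -> R.
Variables a1 a2 : R.

Definition solves_recursion (d : nat -> R) : Prop :=
  d 1%nat = a1 /\ d 2%nat = a2 /\
  (forall n : nat, (1 <= n)%nat -> d (n + 2)%nat = f n (d n) (d (n + 1)%nat)).

(* The pair (d_(k+1), d_(k+2)), computed by iterating the step. *)
Fixpoint recursion_pair (k : nat) : R * R :=
  match k with
  | O => (a1, a2)
  | S k => let (x, y) := recursion_pair k in (y, f (S k) x y)
  end.

Definition recursion_seq (k : nat) : R :=
  match k with O => 0 | S k => fst (recursion_pair k) end.

Lemma recursion_seq_solves : solves_recursion recursion_seq.
Proof.
  split; [reflexivity|]; split; [reflexivity|].
  intros [|m] Hm; [lia|].
  replace (S m + 2)%nat with (S (S (S m))) by lia.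
  replace (S m + 1)%nat with (S (S m)) by lia.
  simpl recursion_seq; simpl recursion_pair at 1.
  destruct (recursion_pair m) as [x y]; reflexivity.
Qed.

Lemma recursion_unique (d d' : nat -> R) :
  solves_recursion d -> solves_recursion d' ->
  forall n : nat, (1 <= n)%nat -> d n = d' n.
Proof.
  intros [d1 [d2 dr]] [d'1 [d'2 d'r]].
  assert (Hpairs : forall k, d (S k) = d' (S k) /\ d (S (S k)) = d' (S (S k))).
  { induction k as [|k [IH1 IH2]]; [split; congruence|].
    split; [exact IH2|].
    replace (S (S (S k))) with (S k + 2)%nat by lia.
    rewrite (dr (S k)), (d'r (S k)) by lia.
    replace (S k + 1)%nat with (S (S k)) by lia.
    now rewrite IH1, IH2. }
  intros [|n] Hn; [lia | apply Hpairs].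
Qed.

End SecondOrderRecursion.

Lemma ode_lhs_coeff (p q : R) (a : fser) (n : Z) :
  ode_lhs p q a n =
    IZR (n - 1) * (4 * p ^ 2 - IZR n ^ 2) * a n
    + 4 * q * (2 * IZR n + 1) * a (n + 1)%Z
    - 4 * (IZR n + 2) * a (n + 2)%Z.
Proof.
  unfold ode_lhs, fadd, fscale, fX, fD.
  repeat match goal with |- context [a ?e] =>
    let E := fresh in
    first [ assert (E : e = n) by lia
          | assert (E : e = (n + 1)%Z) by lia
          | assert (E : e = (n + 2)%Z) by lia ];
    rewrite E; clear E
  end.
  rewrite !minus_IZR, !plus_IZR; simpl; ring.
Qed.

Lemma ser_of_neg (d : nat -> R) (n : Z) : (n < 0)%Z -> ser_of d n = 0.
Proof. intro Hn; unfold ser_of; destruct (Z.ltb_spec n 0); [reflexivity | lia]. Qed.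

Lemma ser_of_pos (d : nat -> R) (k : nat) :
  ser_of d (Z.of_nat (S k)) = / PI * PI ^ S k * d (S k).
Proof.
  unfold ser_of.
  destruct (Z.ltb_spec (Z.of_nat (S k)) 0); [lia|].
  destruct (Z.eqb_spec (Z.of_nat (S k)) 0); [lia|].
  now rewrite Nat2Z.id.
Qed.

Lemma PI_neq0 : PI <> 0.
Proof. generalize PI_RGT_0; lra. Qed.

Definition recursion_step (p q : R) (n : nat) (x y : R) : R :=
  / PI * ((2 * INR n + 1) / (INR n + 2)) * q * y
  + / PI ^ 2 * ((INR n - 1) / (INR n + 2)) * (p ^ 2 - INR n ^ 2 / 4) * x.

Lemma ode_at_low (p q : R) (d : nat -> R) (n : Z) :
  (n <= -2)%Z -> ode_lhs p q (ser_of d) n = 0.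
Proof.
  intro Hn; rewrite ode_lhs_coeff.
  destruct (Z.eq_dec n (-2)) as [->|Hn2].
  - rewrite !ser_of_neg by lia; simpl; ring.
  - rewrite !ser_of_neg by lia; ring.
Qed.

Lemma ode_at_minus1 (p q : R) (d : nat -> R) :
  ode_lhs p q (ser_of d) (-1)%Z = -4 * (d 1%nat - - q / PI).
Proof.
  rewrite ode_lhs_coeff, ser_of_neg by lia.
  change (-1 + 1)%Z with 0%Z; change (-1 + 2)%Z with (Z.of_nat 1).
  rewrite ser_of_pos; change (ser_of d 0%Z) with (/ PI); simpl.
  field; exact PI_neq0.
Qed.

Lemma ode_at_0 (p q : R) (d : nat -> R) :
  d 1%nat = - q / PI ->
  ode_lhs p q (ser_of d) 0%Z = -8 * PI * (d 2%nat - - (p ^ 2 + q ^ 2) / (2 * PI ^ 2)).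
Proof.
  intro Hd1; rewrite ode_lhs_coeff.
  change (0 + 1)%Z with (Z.of_nat 1); change (0 + 2)%Z with (Z.of_nat 2).
  rewrite !ser_of_pos, Hd1; change (ser_of d 0%Z) with (/ PI); simpl.
  field; exact PI_neq0.
Qed.

Lemma ode_at_pos (p q : R) (d : nat -> R) (m : nat) :
  ode_lhs p q (ser_of d) (Z.of_nat (S m)) =
  -4 * (INR (S m) + 2) * PI ^ (S m + 1)
    * (d (S m + 2)%nat - recursion_step p q (S m) (d (S m)) (d (S m + 1)%nat)).
Proof.
  rewrite ode_lhs_coeff.
  replace (Z.of_nat (S m) + 1)%Z with (Z.of_nat (S (S m))) by lia.
  replace (Z.of_nat (S m) + 2)%Z with (Z.of_nat (S (S (S m)))) by lia.
  replace (S m + 1)%nat with (S (S m)) by lia.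
  replace (S m + 2)%nat with (S (S (S m))) by lia.
  rewrite !ser_of_pos, minus_IZR, <- !INR_IZR_INZ.
  unfold recursion_step.
  assert (Hpos : 0 < INR (S m) + 2) by (pose proof (pos_INR (S m)); lra).
  simpl pow; field; split; [lra | exact PI_neq0].
Qed.

Lemma solution_iff_recursion (p q : R) (d : nat -> R) :
  is_formal_solution p q d <->
  solves_recursion (recursion_step p q) (- q / PI) (- (p ^ 2 + q ^ 2) / (2 * PI ^ 2)) d.
Proof.
  assert (HPI : 0 < PI) by exact PI_RGT_0.
  split.
  - intro Hsol.
    assert (Hd1 : d 1%nat = - q / PI).
    { pose proof (Hsol (-1)%Z) as E; rewrite ode_at_minus1 in E; lra. }
    split; [exact Hd1|]; split.
    + pose proof (Hsol 0%Z) as E; rewrite ode_at_0 in E by exact Hd1.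
      apply Rmult_integral in E as [E|E]; [lra | lra].
    + intros [|m] Hm; [lia|].
      pose proof (Hsol (Z.of_nat (S m))) as E; rewrite ode_at_pos in E.
      assert (0 < PI ^ (S m + 1)) by (apply pow_lt; exact HPI).
      assert (0 < INR (S m) + 2) by (pose proof (pos_INR (S m)); lra).
      apply Rmult_integral in E as [E|E]; [nra | lra].
  - intros [Hd1 [Hd2 Hrec]] n.
    destruct (Z_le_gt_dec n (-2)) as [Hn|Hn]; [now apply ode_at_low|].
    destruct (Z.eq_dec n (-1)) as [->|Hn1].
    { rewrite ode_at_minus1, Hd1; ring. }
    destruct (Z.eq_dec n 0) as [->|Hn0].
    { rewrite ode_at_0, Hd2 by exact Hd1; ring. }
    replace n with (Z.of_nat (S (Z.to_nat n - 1))) by lia.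
    rewrite ode_at_pos, (Hrec (S _)) by lia; ring.
Qed.

Theorem proposition2p10 (p q : R) :
  (exists d : nat -> R, is_formal_solution p q d) /\
  (forall d d' : nat -> R, is_formal_solution p q d -> is_formal_solution p q d' ->
     forall n : nat, (1 <= n)%nat -> d n = d' n) /\
  (forall d : nat -> R, is_formal_solution p q d ->
     d 1%nat = - q / PI /\
     d 2%nat = - (p ^ 2 + q ^ 2) / (2 * PI ^ 2) /\
     (forall n : nat, (1 <= n)%nat ->
        d (n + 2)%nat =
          / PI * ((2 * INR n + 1) / (INR n + 2)) * q * d (n + 1)%nat
          + / PI ^ 2 * ((INR n - 1) / (INR n + 2)) * (p ^ 2 - INR n ^ 2 / 4) * d n)).
Proof.
  split; [|split].
  - eexists; apply solution_iff_recursion, recursion_seq_solves.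
  - intros d d' Hd Hd'.
    apply solution_iff_recursion in Hd, Hd'.
    exact (recursion_unique _ _ _ _ _ Hd Hd').
  - intros d Hd; exact (proj1 (solution_iff_recursion p q d) Hd).
Qed.
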